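(* Let $X,Y$ be random variables with $0\le Y\le 1$ and $X=E(Y\mid X)$. Then for every $\delta\in[0,\tfrac12)$, $$P(|Y-X|\ge1-\delta)\le\delta,$$ with equality if $X=\delta$ (constant) and $Y$ has the Bernoulli$(\delta)$ distribution. *)

From HB Require Import structures.
From mathcomp Require Import all_boot all_order all_algebra.
From mathcomp Require Import all_classical all_reals all_analysis.
Set Implicit Arguments. Unset Strict Implicit. Unset Printing Implicit Defensive.
Import Order.TTheory GRing.Theory Num.Theory.
Local Open Scope classical_set_scope.
Local Open Scope ring_scope.

(* [is_cond_exp_self P X Y] : X is a version of the conditional expectation
   E(Y | sigma(X)), i.e. X is integrable and, for every Borel set B,
   E[Y ; X \in B] = E[X ; X \in B].  (X is trivially sigma(X)-measurable.) *)
Definition is_cond_exp_self d (T : measurableType d) (R : realType)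
  (P : probability T R) (X Y : {RV P >-> R}) : Prop :=
  P.-integrable setT (EFin \o X) /\
  forall B : set R, measurable B ->
    (\int[P]_(t in X @^-1` B) (Y t)%:E = \int[P]_(t in X @^-1` B) (X t)%:E)%E.

From HB Require Import structures.
From mathcomp Require Import all_boot all_order all_algebra.
From mathcomp Require Import all_classical all_reals all_analysis.
From mathcomp Require Import lra measurable_realfun.
Import Order.TTheory GRing.Theory Num.Theory.
Local Open Scope classical_set_scope.
Local Open Scope ring_scope.

(* Let A be the event |Y - X| >= 1 - delta.  Since 0 <= Y <= 1 and delta < 1/2,
   on A either X <= delta (and Y - X >= 1 - delta) or X >= 1 - delta (and
   X - Y >= 1 - delta).  On B = {X <= delta} we have 1_A - delta <= Y - X, and
   E[Y - X; B] = 0 because X = E(Y | X); hence P(A, B) <= delta P(B).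
   Symmetrically P(A, X >= 1 - delta) <= delta P(X >= 1 - delta), and the two
   events on X are disjoint, so P(A) <= delta.  For X = delta and Y Bernoulli,
   A contains {Y = 1} and misses {Y = 0}, so P(A) = delta. *)

Lemma le_measure_of_indic_le_diff d (T : measurableType d) (R : realType)
    (mu : {finite_measure set T -> \bar R}) (f g : T -> R) (A B : set T)
    (c : R) :
  measurable A -> measurable B -> A `<=` B ->
  mu.-integrable B (EFin \o f) -> mu.-integrable B (EFin \o g) ->
  (forall t, B t -> f t + \1_A t - c <= g t) ->
  (\int[mu]_(t in B) (f t)%:E = \int[mu]_(t in B) (g t)%:E)%E ->
  (mu A <= c%:E * mu B)%E.
Proof.
move=> mA mB AB fi gi fg e.
have iA : mu.-integrable B (EFin \o \1_A).
  by apply: (integrableS measurableT) => //; exact: integrable_indic.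
have igf : mu.-integrable B (EFin \o (g \- f)).
  by have := integrableB mB gi fi; apply: eq_integrable.
have ic := finite_measure_integrable_cst mu c mB.
have : (\int[mu]_(t in B) (\1_A t)%:E <=
        \int[mu]_(t in B) ((g \- f) t + cst c t)%:E)%E.
  apply: le_integral => //.
    by have := integrableD mB igf ic; apply: eq_integrable.
  by move=> t; rewrite inE => Bt; rewrite lee_fin /=; have := fg t Bt; lra.
rewrite integral_indic // setIidl // integralD_EFin //.
rewrite (_ : \int[mu]_(t in B) (EFin \o cst c) t = c%:E * mu B)%E;
  last by rewrite -integral_cst //; apply: eq_integral.
rewrite (_ : \int[mu]_(t in B) _ = \int[mu]_(t in B) ((g t)%:E - (f t)%:E))%E;
  last by apply: eq_integral => t _; rewrite /= EFinB.
by rewrite integralB_EFin // -e subee ?add0e //; exact: integrable_fin_num.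
Qed.

Lemma dev_ge_low {R : realFieldType} {c x y : R} :
  c < 1 / 2 -> 0 <= y -> x <= c -> 1 - c <= `|y - x| -> 1 - c <= y - x.
Proof. by move=> ? ? ?; rewrite ler_normr => /orP[] //; lra. Qed.

Lemma dev_ge_high {R : realFieldType} {c x y : R} :
  c < 1 / 2 -> y <= 1 -> 1 - c <= x -> 1 - c <= `|y - x| -> 1 - c <= x - y.
Proof. by move=> ? ? ?; rewrite ler_normr => /orP[] //; lra. Qed.

Lemma measurable_dev_ge d (T : measurableType d) (R : realType)
    (X Y : {mfun T >-> R}) (c : R) :
  measurable [set t | c <= `|Y t - X t|].
Proof.
have mdev : measurable_fun setT (fun t => `|Y t - X t|).
  by apply: measurableT_comp; [exact: normr_measurable | exact: measurable_funB].
by rewrite -preimage_itvcy -[_ @^-1` _]setTI; apply: mdev => //; exact: measurable_itv.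
Qed.

Section cond_exp_self_deviation.
Context {d} {T : measurableType d} {R : realType} {P : probability T R}.
Context {X Y : {RV P >-> R}} {delta : R}.
Hypothesis Y01 : forall t, 0 <= Y t <= 1.
Hypothesis XY : is_cond_exp_self X Y.
Hypothesis delta_ge0 : 0 <= delta.
Hypothesis delta_lt_half : delta < 1 / 2.

Let A := [set t | 1 - delta <= `|Y t - X t|].
Let Xlo := X @^-1` `]-oo, delta].
Let Xhi := X @^-1` `[1 - delta, +oo[.

Let mA : measurable A. Proof. exact: measurable_dev_ge. Qed.
Let mXlo : measurable Xlo.
Proof. by apply: measurable_funPTI; exact: measurable_itv. Qed.
Let mXhi : measurable Xhi.
Proof. by apply: measurable_funPTI; exact: measurable_itv. Qed.

Let integrable_X : P.-integrable setT (EFin \o X). Proof. by case: XY. Qed.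

Let integrable_Y : P.-integrable setT (EFin \o Y).
Proof.
apply: (le_integrable measurableT _ _ (finite_measure_integrable_cst P 1 measurableT)).
  exact/measurable_EFinP.
by move=> t _ /=; rewrite normr1 lee_fin ger0_norm; case/andP: (Y01 t).
Qed.

Lemma measure_dev_ge_Xlo : (P (A `&` Xlo) <= delta%:E * P Xlo)%E.
Proof.
apply: (@le_measure_of_indic_le_diff _ _ _ P X Y) => //.
- exact: measurableI.
- exact: integrableS integrable_X.
- exact: integrableS integrable_Y.
- move=> t; rewrite /Xlo /= in_itv /= => Xt; case/andP: (Y01 t) => Y0 Y1.
  rewrite indicE; case: (boolP (t \in _)) => [/set_mem[+ _]|_]; last by rewrite addr0; lra.
  by rewrite /A /= mulr1n => /(dev_ge_low delta_lt_half Y0 Xt); lra.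
- by case: XY => _ ->; [|exact: measurable_itv].
Qed.

Lemma measure_dev_ge_Xhi : (P (A `&` Xhi) <= delta%:E * P Xhi)%E.
Proof.
apply: (@le_measure_of_indic_le_diff _ _ _ P Y X) => //.
- exact: measurableI.
- exact: integrableS integrable_Y.
- exact: integrableS integrable_X.
- move=> t; rewrite /Xhi /= in_itv /= andbT => Xt; case/andP: (Y01 t) => Y0 Y1.
  rewrite indicE; case: (boolP (t \in _)) => [/set_mem[+ _]|_]; last by rewrite addr0; lra.
  by rewrite /A /= mulr1n => /(dev_ge_high delta_lt_half Y1 Xt); lra.
- by case: XY => _ ->; [|exact: measurable_itv].
Qed.

Let dev_ge_sub_Xlo_Xhi : A `<=` Xlo `|` Xhi.
Proof.
move=> t; rewrite /A /Xlo /Xhi /= !in_itv /= andbT ler_normr.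
by case/andP: (Y01 t) => Y0 Y1 /orP[] ?; [left | right]; lra.
Qed.

Let Xlo_Xhi_disjoint : Xlo `&` Xhi = set0.
Proof.
(* [lra] does not use section hypotheses, hence the [move:]. *)
apply/seteqP; split => t //=; rewrite /Xlo /Xhi /= !in_itv /= andbT => -[].
by move: delta_lt_half; lra.
Qed.

Theorem cond_exp_self_dev_ge_bound : (P A <= delta%:E)%E.
Proof.
have -> : A = (A `&` Xlo) `|` (A `&` Xhi).
  by rewrite -setIUr; apply/esym/setIidl; exact: dev_ge_sub_Xlo_Xhi.
apply: (le_trans (measureU2 _ (measurableI _ _ mA mXlo) (measurableI _ _ mA mXhi))).
apply: (le_trans (leeD measure_dev_ge_Xlo measure_dev_ge_Xhi)).
rewrite -ge0_muleDr // -measureU // ?Xlo_Xhi_disjoint //.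
rewrite -[leRHS]mule1; apply: lee_wpmul2l; first by rewrite lee_fin.
by apply: probability_le1; exact: measurableU.
Qed.

End cond_exp_self_deviation.

Lemma dev_ge_const_bernoulli {d} {T : measurableType d} {R : realType}
    {P : probability T R} {X Y : {RV P >-> R}} {delta : R} :
  delta < 1 / 2 -> (forall t, X t = delta) ->
  P [set t | Y t = 1] = delta%:E -> P [set t | Y t = 0] = (1 - delta)%:E ->
  P [set t | 1 - delta <= `|Y t - X t|] = delta%:E.
Proof.
move=> delta_lt_half Xdelta PY1 PY0.
have mYeq c : measurable [set t | Y t = c].
  by rewrite (_ : [set t | _] = Y @^-1` [set c]) //; exact: measurable_funPTI.
apply/eqP; rewrite eq_le; apply/andP; split.
- have -> : delta%:E = (1 - (1 - delta)%:E)%E.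
    by rewrite EFinB oppeB // addeA subee // add0e.
  rewrite -PY0 -probability_setC //.
  apply: le_measure; rewrite ?inE; [exact: measurable_dev_ge | exact: measurableC |].
  move=> t /= + Y0; rewrite Y0 Xdelta sub0r normrN ler_normr.
  by case/orP; lra.
- rewrite -PY1; apply: le_measure; rewrite ?inE; [exact: mYeq | exact: measurable_dev_ge |].
  by move=> t /= ->; rewrite Xdelta ler_norm.
Qed.

Theorem lemma3p1 (d : measure_display) (T : measurableType d) (R : realType)
  (P : probability T R) :
  (forall (X Y : {RV P >-> R}),
      (forall t, 0 <= Y t <= 1) ->
      is_cond_exp_self X Y ->
      forall delta : R, 0 <= delta < 1 / 2 ->
        (P [set t | (1 - delta <= `|Y t - X t|)%R] <= delta%:E)%E) /\
  (forall (X Y : {RV P >-> R}) (delta : R), 0 <= delta < 1 / 2 ->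
      (forall t, X t = delta) ->
      P [set t | Y t = 1] = delta%:E ->
      P [set t | Y t = 0] = (1 - delta)%:E ->
      P [set t | (1 - delta <= `|Y t - X t|)%R] = delta%:E).
Proof.
split=> [X Y Y01 XY delta /andP[delta_ge0 delta_lt_half] |
         X Y delta /andP[_ delta_lt_half]].
- exact: (cond_exp_self_dev_ge_bound Y01 XY delta_ge0 delta_lt_half).
- exact: (dev_ge_const_bernoulli delta_lt_half).
Qed.
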